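(* Let $m\ge 1$, $\bar l=(l_0,\dots,l_m)\in\mathbb{Z}_{\ge1}^{m+1}$, $L=l_0+\dots+l_m$, let $\alpha_1,\dots,\alpha_m$ be indeterminates and $\alpha_0=0$. For $j=0,1,\dots,m$ define \[ A_{\bar l,j}(t,\bar\alpha)=\sum_{i=l_j}^{L}t^{L-i}\,i!\,\sigma_i\big(\bar l,(\alpha_0-\alpha_j,\alpha_1-\alpha_j,\dots,\alpha_m-\alpha_j)\big). \] Then $\frac{1}{l_j!}A_{\bar l,j}(t,\bar\alpha)\in\mathbb{Z}[t,\alpha_1,\dots,\alpha_m]$ for all $j=0,1,\dots,m$.
   Context: For $\bar\beta=(\beta_0,\dots,\beta_m)$ the coefficients $\sigma_i(\bar l,\bar\beta)$ are defined by $\prod_{h=0}^m(\beta_h-w)^{l_h}=\sum_{i=0}^L\sigma_i(\bar l,\bar\beta)w^i$. (For $\bar\beta$ whose $j$-th coordinate is $0$, $\sigma_i=0$ for $i<l_j$.) For $j\ge1$, $A_{\bar l,j}$ is the polynomial satisfying $e^{\alpha_jt}A_{\bar l,0}(t)-A_{\bar l,j}(t)=O(t^{L+1})$ with $\deg_t A_{\bar l,j}\le L-l_j$. *)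

From mathcomp Require Import all_boot all_algebra.
From mathcomp Require Import mpoly.
Set Implicit Arguments. Unset Strict Implicit. Unset Printing Implicit Defensive.
Import GRing.Theory.
Local Open Scope ring_scope.

(* Polynomial ring Q[t, alpha_1, ..., alpha_m] as {mpoly rat[m.+1]}:
   variable 'X_0 is t, variable 'X_h (1 <= h <= m) is alpha_h. *)

Definition alpha (m : nat) (h : 'I_m.+1) : {mpoly rat[m.+1]} :=
  if h == ord0 then 0 else 'X_h.

Definition tvar (m : nat) : {mpoly rat[m.+1]} := 'X_ord0.

Definition sigma (m : nat) (l : 'I_m.+1 -> nat)
  (beta : 'I_m.+1 -> {mpoly rat[m.+1]}) (i : nat) : {mpoly rat[m.+1]} :=
  (\prod_(h < m.+1) ((beta h)%:P - 'X) ^+ l h)`_i.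

Definition Lsum (m : nat) (l : 'I_m.+1 -> nat) : nat := (\sum_(h < m.+1) l h)%N.

Definition Apoly (m : nat) (l : 'I_m.+1 -> nat) (j : 'I_m.+1) : {mpoly rat[m.+1]} :=
  \sum_(l j <= i < (Lsum l).+1)
     tvar m ^+ (Lsum l - i) * (i`!)%:R * sigma l (fun h => alpha h - alpha j) i.

(* Shifting the roots by alpha_j keeps the coefficients sigma_i integral, and
   the weight i! / l_j! = C(i, l_j) (i - l_j)! is an integer because the sum
   defining A_{l,j} only runs over i >= l_j. *)
From mathcomp Require Import all_boot all_algebra.
From mathcomp Require Import mpoly.
Set Implicit Arguments. Unset Strict Implicit. Unset Printing Implicit Defensive.
Import GRing.Theory Num.Theory.
Local Open Scope ring_scope.

Lemma fact_divr_fact (F : numFieldType) (n i : nat) : (n <= i)%N ->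
  (n`!%:R)^-1 * i`!%:R = ('C(i, n) * (i - n)`!)%:R :> F.
Proof.
move=> le_ni; rewrite -(bin_fact le_ni) mulnCA natrM mulKf //.
by rewrite pnatr_eq0 -lt0n fact_gt0.
Qed.

Lemma map_poly_prod_CsubX (R S : comNzRingType) (f : {rmorphism R -> S})
    (I : finType) (b : I -> R) (l : I -> nat) :
  map_poly f (\prod_(h : I) ((b h)%:P - 'X) ^+ l h)
  = \prod_(h : I) ((f (b h))%:P - 'X) ^+ l h.
Proof.
rewrite rmorph_prod; apply: eq_bigr => h _.
by rewrite rmorphXn rmorphB /= map_polyC map_polyX.
Qed.

Section IntegralLift.

Variables (m : nat) (l : 'I_m.+1 -> nat).

Local Notation ratp := (map_mpoly (intr : int -> rat)).

Definition alphaZ (h : 'I_m.+1) : {mpoly int[m.+1]} :=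
  if h == ord0 then 0 else 'X_h.

Definition sigmaZ (beta : 'I_m.+1 -> {mpoly int[m.+1]}) (i : nat) :=
  (\prod_(h < m.+1) ((beta h)%:P - 'X) ^+ l h)`_i.

Definition ApolyZ (j : 'I_m.+1) : {mpoly int[m.+1]} :=
  \sum_(l j <= i < (Lsum l).+1)
     'X_ord0 ^+ (Lsum l - i) * ('C(i, l j) * (i - l j)`!)%:R
       * sigmaZ (fun h => alphaZ h - alphaZ j) i.

Lemma ratp_X (i : 'I_m.+1) : ratp 'X_i = 'X_i.
Proof. exact: map_mpolyX. Qed.

Lemma ratp_alpha (h : 'I_m.+1) : ratp (alphaZ h) = alpha h.
Proof. by rewrite /alphaZ /alpha; case: (h == ord0); rewrite ?rmorph0 ?ratp_X. Qed.

Lemma eq_sigma (beta beta' : 'I_m.+1 -> {mpoly rat[m.+1]}) (i : nat) :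
  beta =1 beta' -> sigma l beta i = sigma l beta' i.
Proof.
move=> eq_beta; apply: (congr1 (fun p : {poly {mpoly rat[m.+1]}} => p`_i)).
by apply: eq_bigr => h _; rewrite eq_beta.
Qed.

Lemma ratp_sigma (beta : 'I_m.+1 -> {mpoly int[m.+1]}) (i : nat) :
  ratp (sigmaZ beta i) = sigma l (fun h => ratp (beta h)) i.
Proof. by rewrite /sigmaZ /sigma -coef_map map_poly_prod_CsubX. Qed.

Lemma ratp_ApolyZ (j : 'I_m.+1) :
  ratp (ApolyZ j) = ((l j)`!%:R)^-1 *: Apoly l j.
Proof.
rewrite rmorph_sum /Apoly /tvar scaler_sumr; apply: eq_big_nat => i /andP[le_ji _].
rewrite 2!rmorphM rmorphXn rmorph_nat /= ratp_X ratp_sigma.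
rewrite (@eq_sigma _ (fun h => alpha h - alpha j)); last first.
  by move=> h; rewrite rmorphB /= !ratp_alpha.
rewrite scalerAl scalerAr -!(scaler_nat _ (1 : {mpoly rat[m.+1]})).
by rewrite scalerA fact_divr_fact.
Qed.

End IntegralLift.

Theorem lemma4p3 (m : nat) (hm : (1 <= m)%N) (l : 'I_m.+1 -> nat)
  (hl : forall h, (1 <= l h)%N) (j : 'I_m.+1) :
  exists P : {mpoly int[m.+1]},
    map_mpoly (fun z : int => z%:~R : rat) P = ((l j)`!%:R)^-1 *: Apoly l j.
Proof. by exists (ApolyZ l j); exact: ratp_ApolyZ. Qed.
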